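(* Let $\phi\in\,]0,\pi[$, $M\in\mathbb{R}$, $N>0$, let $\Sigma$ be the Keplerian branch around ${\rm O}$ in the plane ${\rm O}xy$ with equation $r=My+N$, and let $g$ be the affine map $(x_1,y_1)\mapsto(x_3,y_3)$ defined by $x_1=x_3-M\frac{\cos\phi}{\sin\phi}y_3-N\cos\phi$, $y_1=\frac{1}{\sin\phi}y_3$. Let a Keplerian orbit describe $\Sigma$, with areal constant $C$ and energy $H$, and consider the Keplerian orbit describing $g(\Sigma)$ in the direction induced by $g$. Then its areal constant is $C\sin\phi$ (the areal constant is multiplied by $\sin\phi$, as the areas are), and its energy equals $H$.
   Context: In the Euclidean plane ${\rm O}xy$, $r=\sqrt{x^2+y^2}$, and Newton's system $\ddot q=-q/r^3$ for $q=(x,y)$. The areal constant (angular momentum) is $C=x\dot y-y\dot x$ and the energy is $H=\frac12(\dot x^2+\dot y^2)-\frac1r$, both constant along solutions. A Keplerian branch is the image of a solution; for $\gamma>0$, the set $r=\alpha x+\beta y+\gamma$ is a Keplerian branch, described by exactly two Keplerian orbits (differing in orientation), which have $C^2=\gamma$. The image $g(\Sigma)$ is the Keplerian branch $r=x\cos\phi+yM\sin\phi+N\sin^2\phi$; $g$ maps the oriented curve $\Sigma$ onto an oriented curve, and the image orbit is the Keplerian orbit describing $g(\Sigma)$ in that direction, time-parametrized as a solution of Newton's system. *)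

From Stdlib Require Import Reals.
From Coquelicot Require Import Coquelicot.
Open Scope R_scope.

Definition pt := (R * R)%type.

Definition rad (z : pt) : R := sqrt (fst z ^ 2 + snd z ^ 2).

Definition newton_sol (x y : R -> R) : Prop :=
  (forall t, x t ^ 2 + y t ^ 2 <> 0) /\
  (forall t, ex_derive x t /\ ex_derive y t) /\
  (forall t, is_derive (Derive x) t (- x t / (rad (x t, y t)) ^ 3) /\
             is_derive (Derive y) t (- y t / (rad (x t, y t)) ^ 3)).

Definition areal (x y : R -> R) (t : R) : R :=
  x t * Derive y t - y t * Derive x t.

Definition energy (x y : R -> R) (t : R) : R :=
  / 2 * (Derive x t ^ 2 + Derive y t ^ 2) - / rad (x t, y t).

Definition describes (x y : R -> R) (S : pt -> Prop) : Prop :=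
  forall z, (exists t, (x t, y t) = z) <-> S z.

Definition Sigma (M N : R) (z : pt) : Prop := rad z = M * snd z + N.

(* The affine map g : (x1,y1) |-> (x3,y3), written explicitly; it is the
   inverse of  x1 = x3 - M (cos phi / sin phi) y3 - N cos phi,
               y1 = y3 / sin phi. *)
Definition g (phi M N : R) (z : pt) : pt :=
  (fst z + M * cos phi * snd z + N * cos phi, sin phi * snd z).

Definition image_set (f : pt -> pt) (S : pt -> Prop) (w : pt) : Prop :=
  exists z, S z /\ f z = w.

(* Both orbits run on Keplerian branches r = a x + b y + c. Along any such orbit,
   differentiating the branch equation twice and using Newton's equation yields
   C^2 = c and H = (a^2 + b^2 - 1) / (2 c). The branch Sigma has (a, b, c) = (0, M, N)
   and its image has (cos phi, M sin phi, N sin^2 phi), so the energies agree and the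
   areal constants agree up to sign. At the point (N, 0) of Sigma both areal constants
   are positive multiples of the vertical velocities, and these cannot have opposite
   signs because v (s t) = sin phi * y t with s continuous and increasing. *)

From Stdlib Require Import Reals Lra Psatz.
From Coquelicot Require Import Coquelicot.
Open Scope R_scope.

Lemma rad_sq (z : pt) : rad z ^ 2 = fst z ^ 2 + snd z ^ 2.
Proof. unfold rad. rewrite pow2_sqrt; nra. Qed.

Lemma rad_ge0 (z : pt) : 0 <= rad z.
Proof. apply sqrt_pos. Qed.

Lemma rad_gt0 (z : pt) : fst z ^ 2 + snd z ^ 2 <> 0 -> 0 < rad z.
Proof. intro hz. unfold rad. apply sqrt_lt_R0. nra. Qed.

Lemma rad_eq (X Y rho : R) : 0 <= rho -> rho ^ 2 = X ^ 2 + Y ^ 2 -> rad (X, Y) = rho.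
Proof. intros hrho hsq. unfold rad; cbn [fst snd]. rewrite <- hsq. now apply sqrt_pow2. Qed.

Lemma is_derive_zero_const (f : R -> R) :
  (forall t, is_derive f t 0) -> forall t t', f t = f t'.
Proof.
  intros hf t t'.
  destruct (Rtotal_order t t') as [lt | [-> | gt]]; [| reflexivity |].
  - apply eq_is_derive; auto.
  - symmetry; apply eq_is_derive; auto.
Qed.

Lemma is_derive_ext_unique (f g : R -> R) (t a b : R) :
  (forall t, f t = g t) -> is_derive f t a -> is_derive g t b -> a = b.
Proof.
  intros hfg ha hb.
  apply (is_derive_ext f g) in ha; [| exact hfg].
  now rewrite <- (is_derive_unique g t a ha), (is_derive_unique g t b hb).
Qed.

Lemma is_derive_pos_at_right (f : R -> R) (t l : R) :
  is_derive f t l -> 0 < l -> at_right t (fun tau => f t < f tau).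
Proof.
  intros hd hl. apply is_derive_Reals in hd.
  destruct (hd l hl) as [d hq]. exists d. intros tau htau hlt; change R in tau.
  assert (hk : Rabs (tau - t) < d) by exact htau.
  specialize (hq (tau - t) ltac:(lra) hk).
  replace (t + (tau - t)) with tau in hq by ring.
  apply Rabs_def2 in hq. destruct hq as [_ hq].
  assert (hdiff : f tau - f t = (f tau - f t) / (tau - t) * (tau - t)) by (field; lra).
  nra.
Qed.

Lemma filterlim_incr_at_right (s : R -> R) (t : R) :
  continuous s t -> (forall t1 t2, t1 < t2 -> s t1 < s t2) ->
  filterlim s (at_right t) (at_right (s t)).
Proof.
  intros hc hs P [d hP].
  assert (hball : locally t (fun tau => ball (s t) d (s tau))).
  { apply hc. apply locally_ball. }
  apply filter_imp with (2 := hball). intros tau hb hlt.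
  apply hP; [exact hb | now apply hs].
Qed.

Section Reparametrization.

Variables (f h s : R -> R) (K t : R).
Hypotheses (hK : 0 < K) (hs_cont : continuous s t)
  (hs_incr : forall t1 t2, t1 < t2 -> s t1 < s t2)
  (hfh : forall tau, h (s tau) = K * f tau).

Lemma is_derive_reparam_nonneg (l1 l2 : R) :
  is_derive f t l1 -> is_derive h (s t) l2 -> 0 < l2 -> 0 <= l1.
Proof.
  intros hf hh hl2.
  destruct (Rle_or_lt 0 l1) as [| hl1]; [assumption | exfalso].
  assert (hdec : at_right t (fun tau => - f t < - f tau)).
  { apply (is_derive_pos_at_right (fun tau => - f tau) t (- l1)); [| lra].
    exact (is_derive_opp f t l1 hf). }
  assert (hinc : at_right t (fun tau => h (s t) < h (s tau))).
  { exact (filterlim_incr_at_right s t hs_cont hs_incr _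
             (is_derive_pos_at_right h (s t) l2 hh hl2)). }
  destruct (filter_ex _ (filter_and _ _ hdec hinc)) as [tau [hlt1 hlt2]].
  rewrite !hfh in hlt2. nra.
Qed.

End Reparametrization.

Lemma is_derive_reparam_mul_nonneg (f h s : R -> R) (K t l1 l2 : R) :
  0 < K -> continuous s t -> (forall t1 t2, t1 < t2 -> s t1 < s t2) ->
  (forall tau, h (s tau) = K * f tau) ->
  is_derive f t l1 -> is_derive h (s t) l2 -> 0 <= l1 * l2.
Proof.
  intros hK hc hs hfh hf hh.
  destruct (Rtotal_order 0 l2) as [hl2 | [<- | hl2]].
  - pose proof (is_derive_reparam_nonneg f h s K t hK hc hs hfh l1 l2 hf hh hl2). nra.
  - lra.
  - assert (hfh' : forall tau, - h (s tau) = K * - f tau) by (intro; rewrite hfh; ring).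
    pose proof (is_derive_reparam_nonneg (fun tau => - f tau) (fun tau => - h tau) s K t
                  hK hc hs hfh' (- l1) (- l2)
                  (is_derive_opp f t l1 hf) (is_derive_opp h (s t) l2 hh) ltac:(lra)).
    nra.
Qed.

Lemma speed_sq_of_accel (x y a b r al be ga : R) :
  0 < r -> r ^ 2 = x ^ 2 + y ^ 2 -> r = al * x + be * y + ga ->
  a ^ 2 + x * (- x / r ^ 3) + b ^ 2 + y * (- y / r ^ 3) =
    (al * (- x / r ^ 3) + be * (- y / r ^ 3)) * r + (al * a + be * b) ^ 2 ->
  r ^ 2 * (a ^ 2 + b ^ 2) = ga + (al * a + be * b) ^ 2 * r ^ 2.
Proof.
  intros hr hr2 hL E.
  assert (hpot : x * (- x / r ^ 3) + y * (- y / r ^ 3) = - / r).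
  { replace (x * (- x / r ^ 3) + y * (- y / r ^ 3)) with (- (x ^ 2 + y ^ 2) / r ^ 3)
      by (field; lra).
    rewrite <- hr2. field. lra. }
  assert (hacc : (al * (- x / r ^ 3) + be * (- y / r ^ 3)) * r = - (r - ga) / r ^ 2).
  { replace (r - ga) with (al * x + be * y) by lra. field. lra. }
  replace (a ^ 2 + x * (- x / r ^ 3) + b ^ 2 + y * (- y / r ^ 3))
    with (a ^ 2 + b ^ 2 - / r) in E by lra.
  rewrite hacc in E.
  apply Rplus_eq_reg_r with (- r).
  replace (r ^ 2 * (a ^ 2 + b ^ 2) + - r) with (r ^ 2 * (a ^ 2 + b ^ 2 - / r)) by (field; lra).
  rewrite E. field. lra.
Qed.

Lemma areal_energy_of_branch (x y a b r al be ga : R) :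
  0 < r -> r ^ 2 = x ^ 2 + y ^ 2 -> r = al * x + be * y + ga -> 0 < ga ->
  x * a + y * b = (al * a + be * b) * r ->
  r ^ 2 * (a ^ 2 + b ^ 2) = ga + (al * a + be * b) ^ 2 * r ^ 2 ->
  (x * b - y * a) ^ 2 = ga /\
  / 2 * (a ^ 2 + b ^ 2) - / r = (al ^ 2 + be ^ 2 - 1) / (2 * ga).
Proof.
  intros hr hr2 hL hga hrv hv.
  set (C := x * b - y * a). set (D := al * a + be * b) in *. set (Q := be * x - al * y).
  assert (hlagrange : C ^ 2 + (x * a + y * b) ^ 2 = r ^ 2 * (a ^ 2 + b ^ 2))
    by (unfold C; rewrite hr2; ring).
  assert (hC : C ^ 2 = ga) by (rewrite hrv in hlagrange; nra).
  split; [exact hC |].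
  assert (hDQ : D * r * ga = C * Q).
  { assert (hra : r ^ 2 * a = x * (x * a + y * b) - y * C) by (unfold C; rewrite hr2; ring).
    assert (hrb : r ^ 2 * b = y * (x * a + y * b) + x * C) by (unfold C; rewrite hr2; ring).
    assert (r ^ 2 * D = D * r * (al * x + be * y) + C * Q).
    { replace (r ^ 2 * D) with (al * (r ^ 2 * a) + be * (r ^ 2 * b)) by (unfold D; ring).
      rewrite hra, hrb, hrv. unfold Q. ring. }
    replace ga with (r - (al * x + be * y)) by lra. nra. }
  assert (hD2 : ga * (D * r) ^ 2 = Q ^ 2).
  { apply Rmult_eq_reg_l with ga; [| lra].
    replace (ga * (ga * (D * r) ^ 2)) with ((D * r * ga) ^ 2) by ring.
    rewrite hDQ, <- hC. ring. }
  assert (hconic : ga ^ 2 + Q ^ 2 - 2 * ga * r = (al ^ 2 + be ^ 2 - 1) * r ^ 2).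
  { assert (hPQ : (al * x + be * y) ^ 2 + Q ^ 2 = (al ^ 2 + be ^ 2) * r ^ 2)
      by (unfold Q; rewrite hr2; ring).
    replace ga with (r - (al * x + be * y)) by lra. lra. }
  apply Rmult_eq_reg_l with (2 * ga * r ^ 2); [| nra].
  replace (2 * ga * r ^ 2 * (/ 2 * (a ^ 2 + b ^ 2) - / r))
    with (ga * (r ^ 2 * (a ^ 2 + b ^ 2)) - 2 * ga * r) by (field; lra).
  replace (2 * ga * r ^ 2 * ((al ^ 2 + be ^ 2 - 1) / (2 * ga)))
    with ((al ^ 2 + be ^ 2 - 1) * r ^ 2) by (field; lra).
  rewrite hv, <- hconic, <- hD2. ring.
Qed.

Section Newton.

Variables x y : R -> R.
Hypothesis hq : newton_sol x y.

Lemma newton_ex_derive t : ex_derive x t /\ ex_derive y t.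
Proof. apply (proj1 (proj2 hq)). Qed.

Lemma newton_rad_gt0 t : 0 < rad (x t, y t).
Proof. apply rad_gt0, (proj1 hq). Qed.

Lemma newton_accel t :
  is_derive (Derive x) t (- x t / rad (x t, y t) ^ 3) /\
  is_derive (Derive y) t (- y t / rad (x t, y t) ^ 3).
Proof. apply (proj2 (proj2 hq)). Qed.

Lemma is_derive_areal t : is_derive (areal x y) t 0.
Proof.
  destruct (newton_ex_derive t) as [hx hy].
  destruct (newton_accel t) as [hx' hy'].
  pose proof (newton_rad_gt0 t) as hr.
  unfold areal. auto_derive.
  - repeat split; auto; eexists; eauto.
  - rewrite (is_derive_unique (fun u : R => Derive x u) t _ hx'),
            (is_derive_unique (fun u : R => Derive y u) t _ hy').
    change (fun u : R => x u) with x; change (fun u : R => y u) with y.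
    field. lra.
Qed.

Lemma areal_const t t' : areal x y t = areal x y t'.
Proof. apply is_derive_zero_const, is_derive_areal. Qed.

Section Branch.

Variables al be ga : R.
Hypothesis hbranch : forall t, rad (x t, y t) = al * x t + be * y t + ga.

Lemma branch_radial_velocity t :
  x t * Derive x t + y t * Derive y t =
    (al * Derive x t + be * Derive y t) * rad (x t, y t).
Proof.
  destruct (newton_ex_derive t) as [hx hy].
  assert (hsq : forall t, x t ^ 2 + y t ^ 2 = (al * x t + be * y t + ga) ^ 2).
  { intro t0. rewrite <- hbranch. symmetry. apply rad_sq. }
  assert (hl : is_derive (fun t => x t ^ 2 + y t ^ 2) t
                 (2 * (x t * Derive x t + y t * Derive y t))).
  { auto_derive; [tauto |].
    change (fun u : R => x u) with x; change (fun u : R => y u) with y. ring. }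
  assert (hr : is_derive (fun t => (al * x t + be * y t + ga) ^ 2) t
                 (2 * ((al * Derive x t + be * Derive y t) * (al * x t + be * y t + ga)))).
  { auto_derive; [tauto |].
    change (fun u : R => x u) with x; change (fun u : R => y u) with y. ring. }
  pose proof (is_derive_ext_unique _ _ t _ _ hsq hl hr). rewrite hbranch. lra.
Qed.

Lemma branch_speed_sq t :
  rad (x t, y t) ^ 2 * (Derive x t ^ 2 + Derive y t ^ 2) =
    ga + (al * Derive x t + be * Derive y t) ^ 2 * rad (x t, y t) ^ 2.
Proof.
  destruct (newton_ex_derive t) as [hx hy].
  destruct (newton_accel t) as [hx' hy'].
  set (r := rad (x t, y t)).
  assert (hrv : forall t, x t * Derive x t + y t * Derive y t =
      (al * Derive x t + be * Derive y t) * (al * x t + be * y t + ga)).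
  { intro t0. rewrite <- hbranch. apply branch_radial_velocity. }
  assert (hl : is_derive (fun t => x t * Derive x t + y t * Derive y t) t
      (Derive x t ^ 2 + x t * (- x t / r ^ 3) + Derive y t ^ 2 + y t * (- y t / r ^ 3))).
  { auto_derive; [repeat split; auto; eexists; eauto |].
    rewrite (is_derive_unique (fun u : R => Derive x u) t _ hx'),
            (is_derive_unique (fun u : R => Derive y u) t _ hy').
    change (fun u : R => x u) with x; change (fun u : R => y u) with y. unfold r. ring. }
  assert (hr : is_derive
      (fun t => (al * Derive x t + be * Derive y t) * (al * x t + be * y t + ga)) t
      ((al * (- x t / r ^ 3) + be * (- y t / r ^ 3)) * r
         + (al * Derive x t + be * Derive y t) ^ 2)).
  { auto_derive; [repeat split; auto; eexists; eauto |].
    rewrite (is_derive_unique (fun u : R => Derive x u) t _ hx'),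
            (is_derive_unique (fun u : R => Derive y u) t _ hy').
    change (fun u : R => x u) with x; change (fun u : R => y u) with y.
    unfold r. rewrite hbranch. ring. }
  apply speed_sq_of_accel with (x t) (y t).
  - apply newton_rad_gt0.
  - apply rad_sq.
  - apply hbranch.
  - exact (is_derive_ext_unique _ _ t _ _ hrv hl hr).
Qed.

Lemma kepler_branch t :
  0 < ga ->
  areal x y t ^ 2 = ga /\ energy x y t = (al ^ 2 + be ^ 2 - 1) / (2 * ga).
Proof.
  intro hga. apply areal_energy_of_branch.
  - apply newton_rad_gt0.
  - apply rad_sq.
  - apply hbranch.
  - exact hga.
  - apply branch_radial_velocity.
  - apply branch_speed_sq.
Qed.

End Branch.

End Newton.

Lemma describes_mem (x y : R -> R) (S : pt -> Prop) (t : R) :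
  describes x y S -> S (x t, y t).
Proof. intro hS. apply hS. now exists t. Qed.

Lemma Sigma_axis_point (M N : R) : 0 <= N -> Sigma M N (N, 0).
Proof. intro hN. unfold Sigma. cbn [snd]. rewrite Rmult_0_r, Rplus_0_l. apply rad_eq; lra. Qed.

Lemma image_Sigma_branch (phi M N X Y : R) :
  image_set (g phi M N) (Sigma M N) (X, Y) ->
  rad (X, Y) = cos phi * X + M * sin phi * Y + N * sin phi ^ 2.
Proof.
  intros [[a b] [hS hg]]. unfold Sigma in hS. cbn [fst snd] in hS.
  unfold g in hg. cbn [fst snd] in hg. injection hg as <- <-.
  pose proof (sin2_cos2 phi) as hsc. unfold Rsqr in hsc.
  pose proof (COS_bound phi) as hc.
  pose proof (rad_ge0 (a, b)) as hr0. pose proof (rad_sq (a, b)) as hr2. cbn [fst snd] in hr2.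
  set (r := rad (a, b)) in *.
  replace (cos phi * (a + M * cos phi * b + N * cos phi) + M * sin phi * (sin phi * b)
           + N * sin phi ^ 2) with (cos phi * a + r) by (rewrite hS; nra).
  apply rad_eq.
  - assert ((cos phi * a) ^ 2 <= r ^ 2) by nra. nra.
  - replace (a + M * cos phi * b + N * cos phi) with (a + cos phi * r) by (rewrite hS; ring).
    nra.
Qed.

Lemma eq_of_sq_eq_mul_nonneg (A B k : R) :
  0 <= k -> A ^ 2 = (k * B) ^ 2 -> 0 <= A * B -> A = k * B.
Proof.
  intros hk hsq hAB.
  assert (hfac : (A - k * B) * (A + k * B) = 0) by lra.
  destruct (Rmult_integral _ _ hfac) as [| hopp]; [lra |].
  assert (hkB2 : k * B ^ 2 = 0).
  { replace A with (- (k * B)) in hAB by lra. nra. }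
  assert (hkB : k * B = 0) by nra.
  lra.
Qed.

Lemma areal_reparam_nonneg (x y u v s : R -> R) (K t0 : R) :
  ex_derive y t0 -> ex_derive v (s t0) ->
  0 < K -> continuous s t0 -> (forall t1 t2, t1 < t2 -> s t1 < s t2) ->
  (forall t, v (s t) = K * y t) ->
  y t0 = 0 -> 0 <= x t0 -> 0 <= u (s t0) ->
  0 <= areal u v (s t0) * areal x y t0.
Proof.
  intros hy hv hK hc hs hvy hy0 hx0 hu0.
  assert (hv0 : v (s t0) = 0) by (rewrite hvy, hy0; ring).
  unfold areal. rewrite hy0, hv0.
  pose proof (is_derive_reparam_mul_nonneg y v s K t0 _ _ hK hc hs hvy
                (Derive_correct _ _ hy) (Derive_correct _ _ hv)).
  replace ((u (s t0) * Derive v (s t0) - 0 * Derive u (s t0)) *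
           (x t0 * Derive y t0 - 0 * Derive x t0))
    with ((u (s t0) * x t0) * (Derive y t0 * Derive v (s t0))) by ring.
  apply Rmult_le_pos; [apply Rmult_le_pos |]; assumption.
Qed.

Theorem lemma9 (phi M N : R) (hphi : 0 < phi < PI) (hN : 0 < N)
  (x y : R -> R) (hq : newton_sol x y) (hqS : describes x y (Sigma M N))
  (u v : R -> R) (hp : newton_sol u v)
  (hpS : describes u v (image_set (g phi M N) (Sigma M N)))
  (hdir : exists s : R -> R,
      (forall t, continuous s t) /\
      (forall t1 t2, t1 < t2 -> s t1 < s t2) /\
      (forall t, (u (s t), v (s t)) = g phi M N (x t, y t))) :
  forall t t' : R,
    areal u v t = sin phi * areal x y t' /\ energy u v t = energy x y t'.
Proof.
  intros t t'.
  destruct hdir as [s [hs_cont [hs_incr hsg]]].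
  pose proof (sin_gt_0 phi (proj1 hphi) (proj2 hphi)) as hsin.
  pose proof (sin2_cos2 phi) as hsc. unfold Rsqr in hsc.
  assert (hxS : forall t, rad (x t, y t) = 0 * x t + M * y t + N).
  { intro t0. rewrite (describes_mem _ _ _ t0 hqS). cbn [snd]. ring. }
  assert (huS : forall t, rad (u t, v t) =
                  cos phi * u t + M * sin phi * v t + N * sin phi ^ 2).
  { intro t0. apply image_Sigma_branch, (describes_mem _ _ _ t0 hpS). }
  assert (hNs : 0 < N * sin phi ^ 2) by (apply Rmult_lt_0_compat; [| apply pow_lt]; lra).
  destruct (kepler_branch x y hq _ _ _ hxS t' hN) as [hCx hHx].
  destruct (kepler_branch u v hp _ _ _ huS t hNs) as [hCu hHu].
  split.
  2: { rewrite hHu, hHx. replace (cos phi ^ 2) with (1 - sin phi ^ 2) by lra.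
       field. lra. }
  destruct (proj2 (hqS (N, 0)) (Sigma_axis_point M N (Rlt_le _ _ hN))) as [t0 ht0].
  injection ht0 as hx0 hy0.
  rewrite (areal_const u v hp t (s t0)) in *. rewrite (areal_const x y hq t' t0) in *.
  apply eq_of_sq_eq_mul_nonneg.
  - lra.
  - rewrite hCu, Rpow_mult_distr, hCx. ring.
  - pose proof (f_equal fst (hsg t0)) as hu0. rewrite hx0, hy0 in hu0. cbn in hu0.
    apply areal_reparam_nonneg with (K := sin phi);
      [apply (newton_ex_derive x y hq) | apply (newton_ex_derive u v hp) | exact hsin
      | apply hs_cont | exact hs_incr | intro t1; exact (f_equal snd (hsg t1))
      | exact hy0 | lra |].
    rewrite hu0. pose proof (COS_bound phi). nra.
Qed.
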